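(* For all real $a$ and $y>0$, $$\frac{\Gamma(a,y)}{\Gamma(a-1,y)}<\frac12\left[y+a+\sqrt{(y-a)^2+4y}\right]$$ and $$\Gamma(a,y)>\frac{2y^a e^{-y}}{y+1-a+\sqrt{(y-a-1)^2+4y}}.$$
   Context: $\Gamma(a,y)=\int_y^{\infty} t^{a-1}e^{-t}\,dt$ is the upper incomplete gamma function, defined for all real $a$ when $y>0$. *)

From Stdlib Require Import Reals.
From Coquelicot Require Import Coquelicot.
Open Scope R_scope.

Definition gamma_integrand (a t : R) : R := Rpower t (a - 1) * exp (- t).

(* Upper incomplete gamma function  Gamma(a,y) = \int_y^oo t^(a-1) e^(-t) dt
   (improper Riemann integral; converges for all real a when y > 0). *)
Definition upper_gamma (a y : R) : R :=
  RInt_gen (gamma_integrand a) (at_point y) (Rbar_locally p_infty).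

From Stdlib Require Import Reals Lra Classical.
From Coquelicot Require Import Coquelicot.
Open Scope R_scope.

(* Integration by parts gives the recurrence G(a+1) = a G(a) + y^a e^(-y) for
   G(a) := Gamma(a,y), and the positivity of the integral of
   t^(a-2) e^(-t) (t - r)^2 over [y, oo), with r := G(a) / G(a-1), is the strict
   log-convexity G(a)^2 < G(a+1) G(a-1).  Eliminating G(a+1) shows that r satisfies
   r^2 - (a+y) r + y(a-1) < 0, so r lies below the larger root of this quadratic,
   which is the first bound.  The second bound is the first one at a+1, rewritten
   with the recurrence. *)

Lemma is_RInt_gen_of_partials (f : R -> R) (y l : R) :
  (forall b, y <= b -> ex_RInt f y b) ->
  (forall eps, 0 < eps -> exists M, forall b, M < b -> Rabs (RInt f y b - l) < eps) ->
  is_RInt_gen f (at_point y) (Rbar_locally p_infty) l.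
Proof.
  intros Hex Hlim P [eps HP].
  destruct (Hlim eps (cond_pos eps)) as [M HM].
  apply Filter_prod with (fun x => x = y) (fun b => Rmax M y < b).
  - reflexivity.
  - exists (Rmax M y); auto.
  - intros x b -> Hb. pose proof (Rmax_l M y). pose proof (Rmax_r M y).
    exists (RInt f y b). split.
    + apply (RInt_correct (V := R_CompleteNormedModule)), Hex. lra.
    + apply HP, HM. lra.
Qed.

Lemma is_RInt_gen_partials (f : R -> R) (y l : R) :
  is_RInt_gen f (at_point y) (Rbar_locally p_infty) l ->
  forall eps, 0 < eps ->
  exists M, forall b v, M < b -> is_RInt f y b v -> Rabs (v - l) < eps.
Proof.
  intros Hl eps He.
  destruct (Hl (fun v => Rabs (v - l) < eps)) as [Q S HQ [M HM] HP].
  - exists (mkposreal eps He). now intros v Hv.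
  - exists M. intros b v Hb Hv.
    destruct (HP y b HQ (HM b Hb)) as [w [Hw Hwl]]; simpl in Hw.
    replace v with w; [exact Hwl|].
    apply (is_RInt_unique (V := R_CompleteNormedModule)) in Hv, Hw. congruence.
Qed.

Lemma is_RInt_gen_of_primitive (P g : R -> R) (y : R) :
  (forall t, y <= t -> is_derive P t (g t)) ->
  (forall t, y <= t -> continuous g t) ->
  (forall eps, 0 < eps -> exists M, forall b, M < b -> Rabs (P b) < eps) ->
  is_RInt_gen g (at_point y) (Rbar_locally p_infty) (- P y).
Proof.
  intros HP Hg Hlim.
  assert (Hpart : forall b, y <= b -> is_RInt g y b (P b - P y)).
  { intros b Hb.
    pose proof (is_RInt_derive (V := R_CompleteNormedModule) P g y b) as H.
    rewrite Rmin_left, Rmax_right in H by lra.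
    apply H; intros t Ht; [apply HP | apply Hg]; lra. }
  apply is_RInt_gen_of_partials.
  - intros b Hb. eexists. now apply Hpart.
  - intros eps He. destruct (Hlim eps He) as [M HM].
    exists (Rmax M y). intros b Hb.
    pose proof (Rmax_l M y). pose proof (Rmax_r M y).
    rewrite (is_RInt_unique (V := R_CompleteNormedModule) _ _ _ _ (Hpart b ltac:(lra))).
    replace (P b - P y - - P y) with (P b) by ring. apply HM. lra.
Qed.

Section NonnegativeIntegrand.

Variables (h : R -> R) (y : R).
Hypothesis h_cont : forall t, y <= t -> continuous h t.
Hypothesis h_ge0 : forall t, y <= t -> 0 <= h t.

Lemma ex_RInt_right (u v : R) : y <= u -> u <= v -> ex_RInt h u v.
Proof.
  intros Hu Huv. apply (ex_RInt_continuous (V := R_CompleteNormedModule)).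
  intros t Ht. rewrite Rmin_left in Ht by lra. apply h_cont. lra.
Qed.

Lemma RInt_right_le_compat (b b' : R) : y <= b -> b <= b' -> RInt h y b <= RInt h y b'.
Proof.
  intros Hb Hbb'.
  rewrite <- (RInt_Chasles (V := R_CompleteNormedModule) h y b b')
    by (apply ex_RInt_right; lra).
  assert (0 <= RInt h b b').
  { apply RInt_ge_0; [lra | apply ex_RInt_right; lra | intros; apply h_ge0; lra]. }
  simpl. change plus with Rplus. lra.
Qed.

Lemma RInt_le_is_RInt_gen (l b : R) :
  is_RInt_gen h (at_point y) (Rbar_locally p_infty) l -> y <= b -> RInt h y b <= l.
Proof.
  intros Hl Hb. apply Rnot_lt_le. intros Hlt.
  destruct (is_RInt_gen_partials h y l Hl (RInt h y b - l) ltac:(lra)) as [M HM].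
  set (b' := Rmax M b + 1).
  assert (M < b') by (pose proof (Rmax_l M b); unfold b'; lra).
  assert (b < b') by (pose proof (Rmax_r M b); unfold b'; lra).
  assert (Hclose := HM b' _ ltac:(lra)
    (RInt_correct (V := R_CompleteNormedModule) _ _ _ (ex_RInt_right y b' ltac:(lra) ltac:(lra)))).
  pose proof (RInt_right_le_compat b b' Hb ltac:(lra)).
  pose proof (Rle_abs (RInt h y b' - l)). lra.
Qed.

Lemma is_RInt_gen_gt_0 (c l : R) :
  (forall t, y < t -> t <> c -> 0 < h t) ->
  is_RInt_gen h (at_point y) (Rbar_locally p_infty) l -> 0 < l.
Proof.
  intros Hpos Hl.
  set (b := if Rle_dec c y then y + 1 else c).
  assert (Hb : y < b /\ forall t, y < t < b -> t <> c).
  { unfold b; destruct (Rle_dec c y); split; intros; lra. }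
  destruct Hb as [Hyb Hc].
  apply Rlt_le_trans with (RInt h y b).
  - apply RInt_gt_0; [lra | | intros; apply h_cont; lra].
    intros t Ht. apply Hpos; [lra | now apply Hc].
  - apply RInt_le_is_RInt_gen; [exact Hl | lra].
Qed.

Lemma is_RInt_gen_of_bounded_partials (U : R) :
  (forall b, y <= b -> RInt h y b <= U) ->
  exists l, is_RInt_gen h (at_point y) (Rbar_locally p_infty) l.
Proof.
  intros HU.
  set (E := fun x => exists b, y <= b /\ x = RInt h y b).
  assert (HEb : bound E) by (exists U; intros x [b [Hb ->]]; auto).
  assert (HEn : exists x, E x) by (exists (RInt h y y), y; split; auto; lra).
  destruct (completeness E HEb HEn) as [m [Hub Hlub]].
  exists m. apply is_RInt_gen_of_partials.
  - intros b Hb. apply ex_RInt_right; lra.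
  - intros eps He.
    assert (exists b0, y <= b0 /\ m - eps < RInt h y b0) as [b0 [Hb0 Hm]].
    { apply NNPP. intros Hn. assert (m <= m - eps); [|lra].
      apply Hlub. intros x [b [Hb ->]]. apply Rnot_lt_le.
      intros Hlt. apply Hn. now exists b. }
    exists b0. intros b Hb.
    pose proof (RInt_right_le_compat b0 b Hb0 ltac:(lra)).
    assert (RInt h y b <= m) by (apply Hub; exists b; split; auto; lra).
    apply Rabs_def1; lra.
Qed.

End NonnegativeIntegrand.

Lemma ln_lt_id (x : R) : 0 < x -> ln x < x.
Proof.
  intros Hx. pose proof (exp_ineq1_le (ln x)) as Hexp. rewrite exp_ln in Hexp by exact Hx. lra.
Qed.

Lemma mul_ln_le_half (c y : R) : 0 < y -> exists K, forall t, y <= t -> c * ln t <= K + t / 2.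
Proof.
  intros Hy. destruct (Rle_or_lt c 0) as [Hc | Hc].
  - exists (c * ln y). intros t Ht.
    assert (ln y <= ln t) by (apply ln_le; lra). nra.
  - (* c ln t = c ln (2c) + c ln (t / 2c) < c ln (2c) + t / 2 *)
    exists (c * ln (2 * c)). intros t Ht.
    assert (Hsplit : ln t = ln (2 * c) + ln (t / (2 * c))).
    { rewrite <- ln_mult by (try apply Rdiv_lt_0_compat; lra). f_equal. field. lra. }
    pose proof (ln_lt_id (t / (2 * c)) ltac:(apply Rdiv_lt_0_compat; lra)).
    assert (c * (t / (2 * c)) = t / 2) by (field; lra).
    rewrite Hsplit. nra.
Qed.

Lemma Rpower_mul_exp_neg_le (c y : R) : 0 < y ->
  exists K, forall t, y <= t -> Rpower t c * exp (- t) <= exp (K - t / 2).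
Proof.
  intros Hy. destruct (mul_ln_le_half c y Hy) as [K HK].
  exists K. intros t Ht. unfold Rpower. rewrite <- exp_plus.
  destruct (HK t Ht) as [Hlt | Heq]; [left; apply exp_increasing; lra | right; f_equal; lra].
Qed.

Lemma gamma_integrand_pos (a t : R) : 0 < gamma_integrand a t.
Proof. unfold gamma_integrand, Rpower. apply Rmult_lt_0_compat; apply exp_pos. Qed.

Lemma gamma_integrand_continuous (a t : R) : 0 < t -> continuous (gamma_integrand a) t.
Proof.
  intros Ht. apply (ex_derive_continuous (V := R_NormedModule)).
  unfold gamma_integrand, Rpower. auto_derive. lra.
Qed.

Lemma Rpower_pred (x b : R) : 0 < x -> Rpower x b = x * Rpower x (b - 1).
Proof.
  intros Hx. rewrite <- (Rpower_1 x Hx) at 2. rewrite <- Rpower_plus. f_equal. ring.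
Qed.

Lemma gamma_integrand_succ (a t : R) : 0 < t ->
  gamma_integrand (a + 1) t = t * gamma_integrand a t.
Proof.
  intros Ht. unfold gamma_integrand.
  replace (a + 1 - 1) with a by ring. rewrite (Rpower_pred t a Ht). ring.
Qed.

Lemma RInt_exp_half_le (K y b : R) : y <= b ->
  RInt (fun t => exp (K - t / 2)) y b <= 2 * exp (K - y / 2).
Proof.
  intros Hb.
  assert (Hint : is_RInt (fun t => exp (K - t / 2)) y b
                   (minus (-2 * exp (K - b / 2)) (-2 * exp (K - y / 2)))).
  { apply (is_RInt_derive (V := R_CompleteNormedModule) (fun t => -2 * exp (K - t / 2))).
    - intros x _. auto_derive; [easy|].
      change (-2 * (- (1 * / 2) * exp (K + - (x * / 2))) = exp (K - x / 2)).
      unfold Rminus, Rdiv. field.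
    - intros t _. apply (ex_derive_continuous (V := R_NormedModule)). now auto_derive. }
  rewrite (is_RInt_unique (V := R_CompleteNormedModule) _ _ _ _ Hint).
  unfold minus, plus, opp. simpl. pose proof (exp_pos (K - b / 2)). lra.
Qed.

Lemma ex_is_RInt_gen_gamma_integrand (a y : R) : 0 < y ->
  exists l, is_RInt_gen (gamma_integrand a) (at_point y) (Rbar_locally p_infty) l.
Proof.
  intros Hy. destruct (Rpower_mul_exp_neg_le (a - 1) y Hy) as [K HK].
  apply is_RInt_gen_of_bounded_partials with (2 * exp (K - y / 2)).
  - intros t Ht. apply gamma_integrand_continuous. lra.
  - intros t _. left. apply gamma_integrand_pos.
  - intros b Hb. eapply Rle_trans; [| exact (RInt_exp_half_le K y b Hb)].
    apply RInt_le; [exact Hb | | |].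
    + apply (ex_RInt_continuous (V := R_CompleteNormedModule)).
      intros t Ht. apply gamma_integrand_continuous.
      rewrite Rmin_left in Ht by lra. lra.
    + apply (ex_RInt_continuous (V := R_CompleteNormedModule)).
      intros t _. apply (ex_derive_continuous (V := R_NormedModule)). now auto_derive.
    + intros t Ht. apply HK. lra.
Qed.

Lemma is_derive_gamma_recurrence_primitive (b t : R) : 0 < t ->
  is_derive (fun s => - (Rpower s b * exp (- s))) t
    (gamma_integrand (b + 1) t - b * gamma_integrand b t).
Proof.
  intros Ht.
  assert (Hpred : Rpower t (b - 1) = Rpower t b / t).
  { rewrite (Rpower_pred t b Ht). field. lra. }
  unfold gamma_integrand. replace (b + 1 - 1) with b by ring.
  rewrite Hpred. unfold Rpower. auto_derive; [lra|]. field. lra.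
Qed.

Lemma upper_gamma_correct (a y : R) : 0 < y ->
  is_RInt_gen (gamma_integrand a) (at_point y) (Rbar_locally p_infty) (upper_gamma a y).
Proof.
  intros Hy. destruct (ex_is_RInt_gen_gamma_integrand a y Hy) as [l Hl].
  unfold upper_gamma. now rewrite (is_RInt_gen_unique _ _ Hl).
Qed.

Lemma upper_gamma_pos (a y : R) : 0 < y -> 0 < upper_gamma a y.
Proof.
  intros Hy. apply (is_RInt_gen_gt_0 (gamma_integrand a) y) with y.
  - intros t Ht. apply gamma_integrand_continuous. lra.
  - intros t _. left. apply gamma_integrand_pos.
  - intros t _ _. apply gamma_integrand_pos.
  - now apply upper_gamma_correct.
Qed.

Lemma upper_gamma_recurrence (b y : R) : 0 < y ->
  upper_gamma (b + 1) y - b * upper_gamma b y = Rpower y b * exp (- y).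
Proof.
  intros Hy.
  assert (Hibp : is_RInt_gen (fun t => gamma_integrand (b + 1) t - b * gamma_integrand b t)
                   (at_point y) (Rbar_locally p_infty) (Rpower y b * exp (- y))).
  { replace (Rpower y b * exp (- y)) with (- - (Rpower y b * exp (- y))) by ring.
    apply (is_RInt_gen_of_primitive (fun s => - (Rpower s b * exp (- s)))).
    - intros t Ht. apply is_derive_gamma_recurrence_primitive. lra.
    - intros t Ht. apply (continuous_minus (V := R_NormedModule)).
      + apply gamma_integrand_continuous. lra.
      + apply (continuous_scal_r (V := R_NormedModule) b (gamma_integrand b)).
        apply gamma_integrand_continuous. lra.
    - intros eps He. destruct (Rpower_mul_exp_neg_le b y Hy) as [K HK].
      exists (Rmax y (2 * (K - ln eps))). intros t Ht.
      pose proof (Rmax_l y (2 * (K - ln eps))). pose proof (Rmax_r y (2 * (K - ln eps))).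
      rewrite Rabs_Ropp, Rabs_right
        by (left; unfold Rpower; apply Rmult_lt_0_compat; apply exp_pos).
      eapply Rle_lt_trans; [apply HK; lra|].
      rewrite <- (exp_ln eps He). apply exp_increasing. lra. }
  pose proof (is_RInt_gen_minus _ _ _ _ (upper_gamma_correct (b + 1) y Hy)
                (is_RInt_gen_scal _ b _ (upper_gamma_correct b y Hy))) as Hdiff.
  exact (eq_trans (eq_sym (is_RInt_gen_unique _ _ Hdiff)) (is_RInt_gen_unique _ _ Hibp)).
Qed.

Lemma upper_gamma_sq_lt (a y : R) : 0 < y ->
  upper_gamma a y ^ 2 < upper_gamma (a + 1) y * upper_gamma (a - 1) y.
Proof.
  intros Hy.
  set (g0 := upper_gamma (a - 1) y). set (g1 := upper_gamma a y).
  set (g2 := upper_gamma (a + 1) y).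
  assert (Hg0 : 0 < g0) by now apply upper_gamma_pos.
  set (lam := g1 / g0).
  set (h := fun t => gamma_integrand (a + 1) t - 2 * lam * gamma_integrand a t
                     + lam ^ 2 * gamma_integrand (a - 1) t).
  assert (Hh : forall t, 0 < t -> h t = gamma_integrand (a - 1) t * (t - lam) ^ 2).
  { intros t Ht. unfold h.
    pose proof (gamma_integrand_succ (a - 1) t Ht) as Hsucc.
    replace (a - 1 + 1) with a in Hsucc by ring.
    rewrite gamma_integrand_succ, Hsucc by exact Ht. ring. }
  assert (Hint : is_RInt_gen h (at_point y) (Rbar_locally p_infty)
                   (g2 - 2 * lam * g1 + lam ^ 2 * g0)).
  { exact (is_RInt_gen_plus _ _ _ _
      (is_RInt_gen_minus _ _ _ _ (upper_gamma_correct (a + 1) y Hy)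
         (is_RInt_gen_scal _ (2 * lam) _ (upper_gamma_correct a y Hy)))
      (is_RInt_gen_scal _ (lam ^ 2) _ (upper_gamma_correct (a - 1) y Hy))). }
  assert (Hpos : 0 < g2 - 2 * lam * g1 + lam ^ 2 * g0).
  { apply (is_RInt_gen_gt_0 h y) with lam; [| | | exact Hint].
    - intros t Ht. unfold h. apply (ex_derive_continuous (V := R_NormedModule)).
      unfold gamma_integrand, Rpower. auto_derive. lra.
    - intros t Ht. rewrite Hh by lra.
      apply Rmult_le_pos; [left; apply gamma_integrand_pos | apply pow2_ge_0].
    - intros t Ht Hne. rewrite Hh by lra.
      apply Rmult_lt_0_compat; [apply gamma_integrand_pos |].
      apply pow2_gt_0. lra. }
  replace (g2 - 2 * lam * g1 + lam ^ 2 * g0) with ((g2 * g0 - g1 ^ 2) / g0) in Hpos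
    by (unfold lam; field; lra).
  assert (0 < g2 * g0 - g1 ^ 2); [| lra].
  replace (g2 * g0 - g1 ^ 2) with ((g2 * g0 - g1 ^ 2) / g0 * g0) by (field; lra).
  now apply Rmult_lt_0_compat.
Qed.

Lemma lt_larger_root (p q r : R) : r ^ 2 - p * r + q < 0 ->
  r < / 2 * (p + sqrt (p ^ 2 - 4 * q)).
Proof.
  intros Hr.
  assert (Hsq : (2 * r - p) ^ 2 < p ^ 2 - 4 * q) by nra.
  pose proof (pow2_ge_0 (2 * r - p)).
  pose proof (sqrt_pos (p ^ 2 - 4 * q)).
  pose proof (sqrt_sqrt (p ^ 2 - 4 * q) ltac:(lra)).
  assert (2 * r - p < sqrt (p ^ 2 - 4 * q)); [| lra].
  apply Rnot_le_lt. intros Hle. nra.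
Qed.

Lemma upper_gamma_ratio_lt (a y : R) : 0 < y ->
  upper_gamma a y / upper_gamma (a - 1) y < / 2 * (y + a + sqrt ((y - a) ^ 2 + 4 * y)).
Proof.
  intros Hy.
  pose proof (upper_gamma_sq_lt a y Hy) as Hsq.
  pose proof (upper_gamma_recurrence (a - 1) y Hy) as Hrec1.
  replace (a - 1 + 1) with a in Hrec1 by ring.
  pose proof (upper_gamma_recurrence a y Hy) as Hrec2.
  replace (Rpower y a) with (y * Rpower y (a - 1)) in Hrec2
    by (symmetry; now apply Rpower_pred).
  set (g0 := upper_gamma (a - 1) y) in *. set (g1 := upper_gamma a y) in *.
  set (g2 := upper_gamma (a + 1) y) in *.
  assert (Hg0 : 0 < g0) by now apply upper_gamma_pos.
  (* eliminating y^(a-1) e^(-y) between the two recurrences expresses g2 via g0, g1 *)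
  assert (Hg2 : g2 = a * g1 + y * (g1 - (a - 1) * g0)) by nra.
  replace (y + a + sqrt ((y - a) ^ 2 + 4 * y))
    with ((a + y) + sqrt ((a + y) ^ 2 - 4 * (y * (a - 1))))
    by (f_equal; [ring | f_equal; ring]).
  apply lt_larger_root.
  replace ((g1 / g0) ^ 2 - (a + y) * (g1 / g0) + y * (a - 1))
    with ((g1 ^ 2 - g2 * g0) / g0 ^ 2) by (rewrite Hg2; field; lra).
  apply Rdiv_neg_pos; [lra | now apply pow_lt].
Qed.

Theorem corollary8 (a y : R) (hy : 0 < y) :
  upper_gamma a y / upper_gamma (a - 1) y
    < / 2 * (y + a + sqrt ((y - a) ^ 2 + 4 * y))
  /\
  upper_gamma a y
    > 2 * Rpower y a * exp (- y) / (y + 1 - a + sqrt ((y - a - 1) ^ 2 + 4 * y)).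
Proof.
  split; [now apply upper_gamma_ratio_lt |].
  pose proof (upper_gamma_ratio_lt (a + 1) y hy) as Hratio.
  replace (a + 1 - 1) with a in Hratio by ring.
  replace (y - (a + 1)) with (y - a - 1) in Hratio by ring.
  pose proof (upper_gamma_recurrence a y hy) as Hrec.
  pose proof (upper_gamma_pos a y hy) as Hg1.
  set (g1 := upper_gamma a y) in *. set (g2 := upper_gamma (a + 1) y) in *.
  set (D := y + 1 - a + sqrt ((y - a - 1) ^ 2 + 4 * y)) in *.
  set (E := Rpower y a * exp (- y)) in *.
  assert (HE : 0 < E) by (unfold E, Rpower; apply Rmult_lt_0_compat; apply exp_pos).
  assert (HEg1 : E / g1 < / 2 * D).
  { replace (E / g1) with (g2 / g1 - a) by (rewrite <- Hrec; field; lra).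
    unfold D. lra. }
  assert (Hcancel : E / g1 * g1 = E) by (field; lra).
  assert (HD : 0 < D) by (pose proof (Rdiv_lt_0_compat E g1 HE Hg1); lra).
  replace (2 * Rpower y a * exp (- y)) with (2 * E) by (unfold E; ring).
  apply Rlt_gt, Rlt_div_l; [exact HD | nra].
Qed.
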